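(* Let $\vec r\in\mathbb Z^n$. For every $\sigma,\tau\in H_{\vec r}$, $$\varphi_{\vec r}(\sigma)\varphi_{\vec r}(\tau)=\varphi_{\vec r}(\sigma\tau)\,\psi_{\vec r}(\sigma,\tau).$$ Consequently, the restriction of $\psi_{\vec r}$ to $H_{\vec r}\times H_{\vec r}$ is a 2-cocycle on $H_{\vec r}$ with values in $\mathbb T$.
   Context: $n\ge2$, $\theta\in M_n(\mathbb R)$ skew-symmetric, $\omega_{ij}=e^{2\pi i\theta_{ij}}$. $S_n$ acts on $\mathbb Z^n$ by $\sigma\vec r=(r_{\sigma^{-1}(1)},\dots,r_{\sigma^{-1}(n)})$; $H_{\vec r}=\{\sigma\in S_n:\sigma\vec r=\vec r\}$. For $\sigma,\tau\in S_n$: $\vartheta_{\vec r}(\sigma,\tau)=\prod_{i<j,\ \sigma(i)>\sigma(j)}(\omega_{\tau^{-1}(j),\tau^{-1}(i)})^{r_{\sigma(i)}r_{\sigma(j)}}$; $\psi_{\vec r}(\sigma,\tau)=\overline{\vartheta_{\vec r}(\sigma,e)}\,\vartheta_{\vec r}(\sigma,\tau)$ ($e$ the identity permutation); $\varphi_{\vec r}(\sigma)=\overline{\vartheta_{\vec r}(\sigma,e)}$ for $\sigma\in H_{\vec r}$. A 2-cocycle on a group $G$ with values in an abelian group is a function $\psi:G\times G\to A$ with $\psi(g,e)=\psi(e,g)=1$ and $\psi(g,h)\psi(gh,k)=\psi(g,hk)\psi(h,k)$ for all $g,h,k$. *)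

From HB Require Import structures.
From mathcomp Require Import all_boot all_order all_algebra all_fingroup.
From mathcomp Require Import reals trigo.
From mathcomp Require Import complex.
Set Implicit Arguments.
Unset Strict Implicit.
Unset Printing Implicit Defensive.
Import Order.TTheory GRing.Theory Num.Theory.
Local Open Scope ring_scope.

Definition expi2pi (R : realType) (t : R) : R[i] :=
  Complex (cos (2 * pi * t)) (sin (2 * pi * t)).

Definition omega (R : realType) (n : nat) (theta : 'M[R]_n) (i j : 'I_n) : R[i] :=
  expi2pi (theta i j).

(* Usual composition of permutations: (comp_perm s t) x = s (t x).
   (MathComp's group law is (s * t)%g x = t (s x).) *)
Definition comp_perm (n : nat) (s t : 'S_n) : 'S_n := (t * s)%g.

Definition perm_act (n : nat) (s : 'S_n) (r : 'I_n -> int) : 'I_n -> int :=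
  fun k => r ((s^-1)%g k).

Definition Hstab (n : nat) (r : 'I_n -> int) (s : 'S_n) : Prop :=
  perm_act s r = r.

Definition vartheta (R : realType) (n : nat) (theta : 'M[R]_n)
    (r : 'I_n -> int) (s t : 'S_n) : R[i] :=
  \prod_(i : 'I_n) \prod_(j : 'I_n | (i < j)%N && (s j < s i)%N)
     (omega theta ((t^-1)%g j) ((t^-1)%g i)) ^ (r (s i) * r (s j)).

Definition psi (R : realType) (n : nat) (theta : 'M[R]_n)
    (r : 'I_n -> int) (s t : 'S_n) : R[i] :=
  (vartheta theta r s 1%g)^* * vartheta theta r s t.

Definition phi (R : realType) (n : nat) (theta : 'M[R]_n)
    (r : 'I_n -> int) (s : 'S_n) : R[i] :=
  (vartheta theta r s 1%g)^*.

Definition is_T_2cocycle_on (R : realType) (n : nat) (H : 'S_n -> Prop)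
    (f : 'S_n -> 'S_n -> R[i]) : Prop :=
  (forall g h, H g -> H h -> `|f g h| = 1) /\
  (forall g, H g -> f g 1%g = 1 /\ f 1%g g = 1) /\
  (forall g h k, H g -> H h -> H k ->
     f g h * f (comp_perm g h) k = f g (comp_perm h k) * f h k).

(* On the stabilizer H_r the exponent r_{σ i} r_{σ j} in ϑ_r(σ,τ) equals r_a r_b for
   the pair (a, b) = (τ^-1 i, τ^-1 j), so ϑ_r(σ,τ) is a product, over the inversions of σ
   relabelled by τ, of a phase G(a,b) with G(a,b) G(b,a) = 1 (skew-symmetry of θ).
   Comparing exponents pair by pair, an inversion of στ is an inversion of τ or one of σ
   transported by τ, signed; this gives ϑ_r(στ,e) = ϑ_r(τ,e) ϑ_r(σ,τ).  Hence ψ_r is the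
   coboundary of c(σ) = ϑ_r(σ,e) on H_r, thus a normalized 2-cocycle, and since all
   values lie on the unit circle, φ_r = c^-1 and the identity for φ_r is a rewriting. *)

From HB Require Import structures.
From mathcomp Require Import all_boot all_order all_algebra all_fingroup.
From mathcomp Require Import reals trigo.
From mathcomp Require Import complex.
From mathcomp Require Import ring.
From Stdlib Require Import FunctionalExtensionality.
Set Implicit Arguments.
Unset Strict Implicit.
Unset Printing Implicit Defensive.
Import Order.TTheory GRing.Theory Num.Theory.
Local Open Scope ring_scope.

Lemma normrXz_eq1 (F : numFieldType) (z : F) (k : int) : `|z| = 1 -> `|z ^ k| = 1.
Proof. by move=> hz; case: k => m; rewrite /exprz ?normfV normrX hz expr1n ?invr1. Qed.

Lemma conjC_norm1 (C : numClosedFieldType) (z : C) : `|z| = 1 -> z^* = z^-1.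
Proof. by move=> hz; rewrite invC_norm hz expr1n invr1 mul1r. Qed.

Lemma norm_expi2pi (R : realType) (t : R) : `|expi2pi t| = 1.
Proof. by apply/eqP; rewrite -sqrp_eq1 // -add_Re2_Im2 /= cos2Dsin2. Qed.

Lemma conj_expi2pi (R : realType) (t : R) : (expi2pi t)^* = expi2pi (- t).
Proof. by rewrite /expi2pi mulrN cosN sinN. Qed.

Lemma inversion_indicator_comp (n : nat) (s : 'S_n) (x y : 'I_n) : x != y ->
  ((s y < s x)%N : int)
    = ((y < x)%N : int) + (((x < y) && (s y < s x))%N : int)
        - (((y < x) && (s x < s y))%N : int).
Proof.
move=> xy; case: (ltngtP x y) => [_|_|/val_inj exy]; last by rewrite exy eqxx in xy.
all: case: (ltngtP (s x) (s y)) => [_|_|/val_inj/perm_inj exy] //.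
by rewrite exy eqxx in xy.
Qed.

Section InversionProduct.
Variables (C : comUnitRingType) (n : nat) (G : 'I_n -> 'I_n -> C).

Definition rel_prod (P : rel 'I_n) : C :=
  \prod_(a : 'I_n) \prod_(b : 'I_n | P a b) G a b.

Definition inversion_prod (s t : 'S_n) : C :=
  \prod_(i : 'I_n) \prod_(j : 'I_n | (i < j)%N && (s j < s i)%N)
     G ((t^-1)%g i) ((t^-1)%g j).

Lemma inversion_prodE s t :
  inversion_prod s t = rel_prod [rel a b | (t a < t b)%N && (s (t b) < s (t a))%N].
Proof.
rewrite /inversion_prod /rel_prod (reindex_inj (@perm_inj _ t)).
apply: eq_bigr => a _; rewrite (reindex_inj (@perm_inj _ t)).
by apply: eq_big => [b|b _]; rewrite ?permK.
Qed.

Hypothesis G_antisym : forall a b, G a b * G b a = 1.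

Lemma rel_prod_antisym (P : rel 'I_n) : irreflexive P ->
  rel_prod P = \prod_(a : 'I_n) \prod_(b : 'I_n | (a < b)%N)
                  G a b ^ ((P a b : int) - (P b a : int)).
Proof.
move=> P_irr; pose w a b := if P a b then G a b else 1.
have pairE a b : G a b ^ ((P a b : int) - (P b a : int)) = w a b * w b a.
  rewrite /w; case: (P a b); case: (P b a) => /=.
  - by rewrite subrr expr0z G_antisym.
  - by rewrite subr0 expr1z mulr1.
  - by rewrite sub0r exprN1 (mulr1_eq (G_antisym a b)) mul1r.
  - by rewrite subrr expr0z mulr1.
transitivity ((\prod_(a : 'I_n) \prod_(b : 'I_n) (if (a < b)%N then w a b else 1))
            * \prod_(a : 'I_n) \prod_(b : 'I_n) (if (b < a)%N then w a b else 1)).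
  rewrite -big_split; apply: eq_bigr => a _; rewrite big_mkcond -big_split.
  apply: eq_bigr => b _ /=.
  case: (ltngtP a b) => [_|_|/val_inj <-]; rewrite ?mulr1 ?mul1r //.
  by rewrite /w P_irr.
rewrite [X in _ * X]exchange_big -big_split; apply: eq_bigr => a _.
rewrite -big_split [RHS]big_mkcond; apply: eq_bigr => b _ /=.
by case: ifP; rewrite ?mulr1 // pairE.
Qed.

Lemma inversion_prod_comp (s t : 'S_n) :
  inversion_prod (comp_perm s t) 1 = inversion_prod t 1 * inversion_prod s t.
Proof.
have G_unit a b : G a b \is a GRing.unit by apply/unitrPr; exists (G b a).
rewrite !inversion_prodE !rel_prod_antisym //; try by move=> x /=; rewrite ltnn.
rewrite -big_split; apply: eq_bigr => a _; rewrite -big_split; apply: eq_bigr => b ab /=.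
rewrite -exprzDr //; congr (_ ^ _).
have ba : (b < a)%N = false by rewrite ltnNge ltnW.
have tab : t a != t b by rewrite (inj_eq perm_inj) neq_ltn ab.
rewrite /comp_perm !permM !perm1 ab ba /= !subr0 addrA.
exact: inversion_indicator_comp.
Qed.

End InversionProduct.

Section Coboundary.
Variables (F : fieldType) (n : nat) (f : 'S_n -> F).
Hypothesis f_neq0 : forall s, f s != 0.

Definition coboundary (s t : 'S_n) : F := f (comp_perm s t) / (f s * f t).

Lemma coboundary_cocycle g h k :
  coboundary g h * coboundary (comp_perm g h) k
  = coboundary g (comp_perm h k) * coboundary h k.
Proof. by rewrite /coboundary /comp_perm mulgA; field; rewrite !f_neq0. Qed.

Hypothesis f1 : f 1%g = 1.

Lemma coboundary1r s : coboundary s 1%g = 1.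
Proof. by rewrite /coboundary /comp_perm mul1g f1 mulr1 divff. Qed.

Lemma coboundary1l s : coboundary 1%g s = 1.
Proof. by rewrite /coboundary /comp_perm mulg1 f1 mul1r divff. Qed.

End Coboundary.

Section Stabilizer.
Variables (n : nat) (r : 'I_n -> int).

Lemma perm_act1 : perm_act 1 r = r.
Proof. by apply: functional_extensionality => k; rewrite /perm_act invg1 perm1. Qed.

Lemma perm_act_comp (s t : 'S_n) :
  perm_act (comp_perm s t) r = perm_act s (perm_act t r).
Proof. by apply: functional_extensionality => k; rewrite /perm_act invMg permM. Qed.

Lemma Hstab1 : Hstab r 1.
Proof. exact: perm_act1. Qed.

Lemma Hstab_comp (s t : 'S_n) : Hstab r s -> Hstab r t -> Hstab r (comp_perm s t).
Proof. by rewrite /Hstab perm_act_comp => hs ht; rewrite ht hs. Qed.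

Lemma Hstab_invE (s : 'S_n) k : Hstab r s -> r ((s^-1)%g k) = r k.
Proof. by move/(congr1 (fun f => f k)). Qed.

Lemma Hstab_permE (s : 'S_n) k : Hstab r s -> r (s k) = r k.
Proof. by move/(Hstab_invE (s k)); rewrite permK. Qed.

End Stabilizer.

Section Vartheta.
Variables (R : realType) (n : nat) (theta : 'M[R]_n) (r : 'I_n -> int).
Hypothesis theta_skew : theta^T = - theta.

Definition pair_phase (x y : 'I_n) : R[i] := omega theta y x ^ (r x * r y).

Lemma pair_phase_antisym a b : pair_phase a b * pair_phase b a = 1.
Proof.
have theta_ba : theta b a = - theta a b.
  by have := congr1 (fun M : 'M_n => M a b) theta_skew; rewrite !mxE.
rewrite /pair_phase /omega theta_ba -conj_expi2pi [r b * _]mulrC -expfzMl.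
by rewrite -normCKC norm_expi2pi expr1n exp1rz.
Qed.

Lemma norm_vartheta s t : `|vartheta theta r s t| = 1.
Proof.
rewrite normr_prod big1 // => i _; rewrite normr_prod big1 // => j _.
exact/normrXz_eq1/norm_expi2pi.
Qed.

Lemma vartheta_neq0 s t : vartheta theta r s t != 0.
Proof. by rewrite -normr_eq0 norm_vartheta oner_eq0. Qed.

Lemma vartheta_conj s t : (vartheta theta r s t)^* = (vartheta theta r s t)^-1.
Proof. exact/conjC_norm1/norm_vartheta. Qed.

Lemma norm_psi s t : `|psi theta r s t| = 1.
Proof.
(* Rewriting [`|vartheta _ _ s 1|] only after [normfV] avoids a very slow unification. *)
rewrite /psi vartheta_conj normrM (norm_vartheta s t) normfV norm_vartheta.
by rewrite invr1 mulr1.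
Qed.

Lemma vartheta1l t : vartheta theta r 1 t = 1.
Proof.
rewrite /vartheta big1 // => i _; rewrite big_pred0 // => j /=.
by rewrite !perm1; apply/negbTE/andP => -[/ltn_trans ij /ij]; rewrite ltnn.
Qed.

Lemma vartheta_stab s t : Hstab r s -> Hstab r t ->
  vartheta theta r s t = inversion_prod pair_phase s t.
Proof.
move=> hs ht; apply: eq_bigr => i _; apply: eq_bigr => j _.
by rewrite /pair_phase !(Hstab_permE _ hs) !(Hstab_invE _ ht).
Qed.

Lemma vartheta_comp s t : Hstab r s -> Hstab r t ->
  vartheta theta r (comp_perm s t) 1 = vartheta theta r t 1 * vartheta theta r s t.
Proof.
move=> hs ht; have h1 := Hstab1 r; have hst := Hstab_comp hs ht.
rewrite !vartheta_stab //.
exact/inversion_prod_comp/pair_phase_antisym.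
Qed.

Lemma psi_coboundary s t : Hstab r s -> Hstab r t ->
  psi theta r s t = coboundary (fun u => vartheta theta r u 1) s t.
Proof.
move=> hs ht; rewrite /psi /coboundary vartheta_comp // vartheta_conj.
rewrite [_ * vartheta _ _ t 1]mulrC invfM mulrA [vartheta _ _ t 1 * _]mulrC.
by rewrite mulfK ?vartheta_neq0 // mulrC.
Qed.

End Vartheta.

Theorem proposition4p11 (R : realType) (n : nat) (hn : (2 <= n)%N)
    (theta : 'M[R]_n) (hskew : theta^T = - theta) (r : 'I_n -> int) :
  (forall s t : 'S_n, Hstab r s -> Hstab r t ->
     phi theta r s * phi theta r t
       = phi theta r (comp_perm s t) * psi theta r s t)
  /\ is_T_2cocycle_on (Hstab r) (psi theta r).
Proof.
have c_neq0 := vartheta_neq0 theta r ^~ 1%g.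
have c1 := vartheta1l theta r 1.
have h1 := Hstab1 r.
split; last split; last split.
- move=> s t hs ht; rewrite psi_coboundary // /phi /coboundary !vartheta_conj.
  by rewrite mulrA mulVf // mul1r invfM mulrC.
- by move=> s t _ _; apply: norm_psi.
- by move=> s hs; rewrite !psi_coboundary // coboundary1r ?coboundary1l.
- move=> g h k hg hh hk; have hgh := Hstab_comp hg hh; have hhk := Hstab_comp hh hk.
  by rewrite !psi_coboundary //; apply: coboundary_cocycle.
Qed.
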